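(* Let $g \in \mathbb{I}_{\geq 1}$, $c \in \mathbb{I}_{\geq g}$, $b \in \mathbb{I}_{\geq c}$ be integers with $c/g \notin \mathbb{I}$, and let $q := \lceil c/g\rceil$. Let $\mathbb{X}_p \subseteq \mathbb{R}^{n_p}$, $\mathbb{U}_p\subseteq\mathbb{R}^{m_p}$ be closed sets containing the origin, let $f_p:\mathbb{R}^{n_p}\times\mathbb{R}^{m_p}\to\mathbb{R}^{n_p}$ with $f_p(0,0)=0$, let $\mathbb{X}_{f,p}\subseteq\mathbb{X}_p$ be closed and contain the origin, and let $k_p:\mathbb{X}_{f,p}\to\mathbb{U}_p$. Consider the system $x^+ = f(x,u)$ with state $x=(x_p,u_s,\beta)$, input $u=(u_c,\gamma)$, $\gamma\in\{0,1\}$, and $$f(x,u) = \big(f_p(x_p,\gamma u_c+(1-\gamma)u_s),\ \gamma u_c+(1-\gamma)u_s,\ \min\{\beta+g-\gamma c,\, b\}\big).$$ Define $\mathbb{X}_f' := \{0\}\times\{0\}\times\mathbb{I}_{[0,c-g-1]}$, $\mathbb{X}_f'' := \mathbb{X}_{f,p}\times\mathbb{U}_p\times\mathbb{I}_{[c-g,b]}$, $\mathbb{X}_f := \mathbb{X}_f'\cup\mathbb{X}_f''$, the terminal control sequence $\kappa_0(x) := (0,0)$ if $x\in\mathbb{X}_f'$, $\kappa_0(x):=(k_p(x_p),1)$ if $x\in\mathbb{X}_f''$, and $\kappa_j(x):=(0,0)$ for $j\in\mathbb{I}_{[1,q-1]}$; define $f_0(x):=x$ and $f_i(x) := f\big(f_{i-1}(x),\kappa_{(i-1)\bmod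 q}(f_{i-1}(x))\big)$, and let $f_{\beta,i}(x)$ denote the last (bucket) component of $f_i(x)$. For $\sigma>0$ let $V_{f,\beta}(\beta):=\sigma(b^2-\beta^2)$. Then there exists $\alpha:\mathbb{I}_{[0,b]}\to\mathbb{R}$ with $\alpha(b)=0$ and $\alpha(\beta)>0$ for all $\beta\in\mathbb{I}_{[0,b-1]}$ such that for all $x=(x_p,u_s,\beta)\in\mathbb{X}_f$, $$V_{f,\beta}(f_{\beta,q}(x)) - V_{f,\beta}(\beta) \leq -\alpha(\beta).$$
   Context: $\mathbb{I}$ denotes the integers, $\mathbb{I}_{[a,b]} := \mathbb{I}\cap[a,b]$, $\mathbb{I}_{\geq a}:=\mathbb{I}\cap[a,\infty)$. The component $\beta$ models the token level of a token bucket with bucket size $b$, token generation rate $g$ per step and transmission cost $c$; $\gamma=1$ indicates a transmission. *)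

From HB Require Import structures.
From mathcomp Require Import all_boot all_order all_algebra.
From mathcomp Require Import all_classical all_reals all_analysis.
Set Implicit Arguments. Unset Strict Implicit. Unset Printing Implicit Defensive.
Import Order.TTheory GRing.Theory Num.Theory.
Import numFieldNormedType.Exports.
Local Open Scope ring_scope.

Section TokenBucket.
Variables (R : realType) (np mp : nat).
Variables (g c b : int).
Variable fp : 'rV[R]_np -> 'rV[R]_mp -> 'rV[R]_np.
Variable kp : 'rV[R]_np -> 'rV[R]_mp.

(* state x = (x_p, u_s, beta), input u = (u_c, gamma) with gamma : bool
   (gamma = true encodes gamma = 1, false encodes 0). *)
Definition tb_state := ('rV[R]_np * 'rV[R]_mp * int)%type.
Definition tb_input := ('rV[R]_mp * bool)%type.

Definition tb_q : nat := `|Num.ceil (c%:~R / g%:~R : R)|%N.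

Definition tb_f (x : tb_state) (u : tb_input) : tb_state :=
  let: (xp, us, beta) := x in
  let: (uc, gam) := u in
  let uapp := (gam%:R : R) *: uc + (1 - (gam%:R : R)) *: us in
  (fp xp uapp, uapp, Order.min (beta + g - (gam%:Z) * c) b).

Definition in_Xf' (x : tb_state) : bool :=
  [&& x.1.1 == 0, x.1.2 == 0 & (0 <= x.2 <= c - g - 1)].

Definition in_Xf'' (Xfp : set 'rV[R]_np) (Up : set 'rV[R]_mp)
  (x : tb_state) : Prop :=
  Xfp x.1.1 /\ Up x.1.2 /\ (c - g <= x.2 <= b).

Definition in_Xf Xfp Up (x : tb_state) : Prop := in_Xf' x \/ in_Xf'' Xfp Up x.

(* terminal control sequence kappa_j; kappa_0 is only meaningful on X_f
   (X_f' and X_f'' are disjoint), its value outside X_f is irrelevant. *)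
Definition tb_kappa (j : nat) (x : tb_state) : tb_input :=
  if j == 0%N then
    (if in_Xf' x then (0, false) else (kp x.1.1, true))
  else (0, false).

Fixpoint tb_fi (i : nat) (x : tb_state) : tb_state :=
  match i with
  | 0%N => x
  | i'.+1 => let y := tb_fi i' x in tb_f y (tb_kappa (i' %% tb_q) y)
  end.

Definition tb_fbeta (i : nat) (x : tb_state) : int := (tb_fi i x).2.

Definition V_fbeta (sigma : R) (beta : int) : R :=
  sigma * ((b%:~R) ^+ 2 - (beta%:~R) ^+ 2).

End TokenBucket.

(* Only the bucket component matters.  Along the q steps the first input is
   kappa_0 and the others are idle, so the bucket ends at
   min (beta + q g - gamma c, b) with gamma = 1 exactly on X_f''.  Since g does
   not divide c we have q g > c, and on X_f' we have beta < c - g; in both cases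
   the bucket gains at least one token unless it is full.  As V_{f,beta} is
   strictly decreasing on nonnegative levels, alpha(beta) :=
   V(beta) - V(min (beta + 1, b)) does the job. *)

From HB Require Import structures.
From mathcomp Require Import all_boot all_order all_algebra.
From mathcomp Require Import all_classical all_reals all_analysis.
From mathcomp Require Import zify.
Import Order.TTheory GRing.Theory Num.Theory.
Import numFieldNormedType.Exports.
Local Open Scope classical_set_scope.
Local Open Scope ring_scope.

Lemma ceil_ratio_mul_gt (R : realType) (g c : int) :
  0 < g -> ~~ (g %| c)%Z -> c < Num.ceil (c%:~R / g%:~R : R) * g.
Proof.
move=> g_gt0 g_ndvd_c; set k := Num.ceil _.
have c_le : c <= k * g.
  by rewrite -(ler_int R) rmorphM /= -ler_pdivrMr ?ltr0z ?ceil_ge.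
rewrite lt_neqAle c_le andbT; apply: contra g_ndvd_c => /eqP ->.
exact: dvdz_mull.
Qed.

Section Horizon.
Context {R : realType} {g c : int}.
Hypotheses (g_gt0 : 0 < g) (g_le_c : g <= c) (g_ndvd_c : ~~ (g %| c)%Z).

Let ceil_gt : c < Num.ceil (c%:~R / g%:~R : R) * g.
Proof. exact: ceil_ratio_mul_gt. Qed.

Let ceil_gt0 : 0 < Num.ceil (c%:~R / g%:~R : R).
Proof. nia. Qed.

Lemma tb_q_gt0 : (0 < tb_q R g c)%N.
Proof. by rewrite /tb_q absz_gt0 gt_eqF. Qed.

Lemma tb_q_mul_gt : c < (tb_q R g c)%:Z * g.
Proof. by rewrite /tb_q gez0_abs ?ltW. Qed.

End Horizon.

Section Bucket.
Context {R : realType} {np mp : nat} {g c b : int}.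
Context {fp : 'rV[R]_np -> 'rV[R]_mp -> 'rV[R]_np} {kp : 'rV[R]_np -> 'rV[R]_mp}.

Local Notation q := (tb_q R g c).
Local Notation fbeta := (tb_fbeta g c b fp kp).

Lemma tb_f_bucket (y : tb_state R np mp) (uc : 'rV[R]_mp) (gam : bool) :
  (tb_f g c b fp y (uc, gam)).2 = Order.min (y.2 + g - gam%:Z * c) b.
Proof. by case: y => [[? ?] ?]. Qed.

Lemma tb_fbeta1 (x : tb_state R np mp) :
  fbeta 1 x = Order.min (x.2 + g - (~~ in_Xf' g c x)%:Z * c) b.
Proof.
by rewrite /tb_fbeta /= mod0n /tb_kappa /=; case: in_Xf'; rewrite tb_f_bucket.
Qed.

Lemma tb_fbeta_idle_step (x : tb_state R np mp) (i : nat) :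
  (0 < i %% q)%N -> fbeta i.+1 x = Order.min (fbeta i x + g) b.
Proof.
rewrite lt0n => i_mod; rewrite /tb_fbeta /= /tb_kappa (negPf i_mod) tb_f_bucket.
by rewrite mul0r subr0.
Qed.

Lemma tb_fbeta_idle (x : tb_state R np mp) (n : nat) :
  0 <= g -> (n < q)%N -> fbeta n.+1 x = Order.min (fbeta 1 x + n%:Z * g) b.
Proof.
move=> g_ge0; elim: n => [|n IHn] n_lt_q; first by rewrite tb_fbeta1; lia.
rewrite tb_fbeta_idle_step ?modn_small // IHn; last exact: ltnW.
by rewrite -[n.+1]addn1 PoszD; lia.
Qed.

Lemma tb_fbeta_horizon (x : tb_state R np mp) :
  0 <= g -> (0 < q)%N ->
  fbeta q x = Order.min (x.2 + q%:Z * g - (~~ in_Xf' g c x)%:Z * c) b.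
Proof.
move=> g_ge0 q_gt0.
rewrite -[in LHS](prednK q_gt0) tb_fbeta_idle ?prednK // tb_fbeta1.
have -> : q%:Z = q.-1%:Z + 1 by rewrite -PoszD addn1 prednK.
nia.
Qed.

Lemma tb_fbeta_horizon_ge {Xfp Up} (x : tb_state R np mp) :
  0 <= g -> (0 < q)%N -> c < q%:Z * g -> in_Xf g c b Xfp Up x ->
  Order.min (x.2 + 1) b <= fbeta q x.
Proof.
move=> g_ge0 q_gt0 qg_gt x_in; rewrite tb_fbeta_horizon //.
case: x_in => [x_in | [_ [_ /andP[lo hi]]]].
- by rewrite x_in; case/and3P: x_in => _ _ /andP[? ?]; nia.
- have -> : in_Xf' g c x = false by apply/negP => /and3P[_ _ /andP[? ?]]; lia.
  lia.
Qed.

End Bucket.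

Section Lyapunov.
Context {R : realType} {b : int} {sigma : R}.

Lemma V_fbeta_le_le (m n : int) :
  0 <= sigma -> 0 <= m <= n -> V_fbeta b sigma n <= V_fbeta b sigma m.
Proof.
move=> sigma_ge0 /andP[m_ge0 m_le_n]; rewrite /V_fbeta ler_wpM2l // lerD2l lerN2.
by rewrite -!rmorphXn /= ler_int; nia.
Qed.

Lemma V_fbeta_lt_lt (m n : int) :
  0 < sigma -> 0 <= m < n -> V_fbeta b sigma n < V_fbeta b sigma m.
Proof.
move=> sigma_gt0 /andP[m_ge0 m_lt_n]; rewrite /V_fbeta ltr_pM2l // ltrD2l ltrN2.
by rewrite -!rmorphXn /= ltr_int; nia.
Qed.

End Lyapunov.

Theorem lemma2 (R : realType) (np mp : nat) (g c b : int)
  (hg : 1 <= g) (hc : g <= c) (hb : c <= b) (hndiv : ~~ (g %| c)%Z)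
  (Xp : set 'rV[R]_np) (Up : set 'rV[R]_mp)
  (hXp : closed Xp) (hXp0 : Xp 0) (hUp : closed Up) (hUp0 : Up 0)
  (fp : 'rV[R]_np -> 'rV[R]_mp -> 'rV[R]_np) (hfp0 : fp 0 0 = 0)
  (Xfp : set 'rV[R]_np) (hXfpX : Xfp `<=` Xp) (hXfp : closed Xfp) (hXfp0 : Xfp 0)
  (kp : 'rV[R]_np -> 'rV[R]_mp) (hkp : forall xp, Xfp xp -> Up (kp xp))
  (sigma : R) (hsigma : 0 < sigma) :
  exists alpha : int -> R,
    alpha b = 0 /\
    (forall beta : int, 0 <= beta <= b - 1 -> 0 < alpha beta) /\
    (forall x : tb_state R np mp, in_Xf g c b Xfp Up x ->
       V_fbeta b sigma (tb_fbeta g c b fp kp (tb_q R g c) x)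
         - V_fbeta b sigma x.2 <= - alpha x.2).
Proof.
have g_gt0 : 0 < g by lia.
exists (fun beta => V_fbeta b sigma beta - V_fbeta b sigma (Order.min (beta + 1) b)).
split; [|split].
- by rewrite (_ : Order.min (b + 1) b = b) ?subrr //; lia.
- move=> beta beta_range; rewrite subr_gt0 V_fbeta_lt_lt //; lia.
- move=> x x_in; rewrite opprB lerD2r; apply: V_fbeta_le_le; first exact: ltW.
  have x2_ge0 : 0 <= x.2.
    by case: x_in => [/and3P[_ _ /andP[]]|[_ [_ /andP[? ?]]]] //; lia.
  apply/andP; split; first lia.
  exact: tb_fbeta_horizon_ge x (ltW g_gt0) (tb_q_gt0 g_gt0 hc hndiv)
    (tb_q_mul_gt g_gt0 hc hndiv) x_in.
Qed.
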